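(* Let $w=\mathcal C_n(v_0,\dots,v_{k_n-1})$ and $w'=\mathcal C_n(v'_0,\dots,v'_{k_n-1})$ be in $\mathcal W^c_{n+1}$, with $w$ sitting on $[0,q_{n+1})$ and $\mathrm{rev}(w')$ placed on $[j_1,q_{n+1}+j_1)$, where $j_1\in[0,q_n)$, $j_1\equiv p_n^{-1}\pmod{q_n}$. Then: (1) each occurrence of an $n$-subword $v_i$ of $w$ (a copy of $v_i$ in a power $v_i^{l_n-1}$) is either lined up with an occurrence of $\mathrm{rev}(v'_{k_n-i-1})$ in the placed $\mathrm{rev}(w')$, or lies entirely opposite positions of the boundary of the placed $\mathrm{rev}(w')$ (positions not belonging to any of its reversed $n$-subwords); (2) there is a number $C$ such that for every $i<k_n$, the number of occurrences of $v_i$ in $w$ lined up with an occurrence of $\mathrm{rev}(v'_{k_n-i-1})$ is exactly $C$.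
   Context: Circular coefficients $\langle k_n,l_n\rangle$: $k_n\ge2$, $l_n\ge2$, $p_0=0,q_0=1$, $q_{n+1}=k_nl_nq_n^2$, $p_{n+1}=p_nq_nk_nl_n+1$. $\mathcal C_n(w_0,\dots,w_{k_n-1})=\prod_{i=0}^{q_n-1}\prod_{j=0}^{k_n-1}(b^{q_n-j_i}w_j^{l_n-1}e^{j_i})$ (concatenation) with $j_i\in[0,q_n)$, $j_i\equiv p_n^{-1}i\pmod{q_n}$ ($j_i=0$ if $q_n=1$). $\mathcal W^c_n$ is a set of words of length $q_n$ over $\Sigma\cup\{b,e\}$ and $\mathcal W^c_{n+1}$ consists of words $\mathcal C_n(w_0,\dots,w_{k_n-1})$, $w_j\in\mathcal W^c_n$. $\mathrm{rev}(w)$ is $w$ written backwards; the boundary of $\mathcal C_n(\dots)$ consists of the letters in the displayed blocks $b^{q_n-j_i}$, $e^{j_i}$. *)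

From mathcomp Require Import all_boot.
Set Implicit Arguments. Unset Strict Implicit. Unset Printing Implicit Defensive.

(* Letters of Sigma ∪ {b, e}; words are seq (letter S). *)
Inductive letter (S : Type) := Sym of S | LB | LE.
Arguments LB {S}. Arguments LE {S}.

Fixpoint pq (k l : nat -> nat) (n : nat) : nat * nat :=
  match n with
  | 0 => (0, 1)
  | m.+1 => let (p, q) := pq k l m in (p * q * k m * l m + 1, k m * l m * (q * q))
  end.
Definition p_ k l n := (pq k l n).1.
Definition q_ k l n := (pq k l n).2.

(* j_i : the element of [0, q_n) with j_i = p_n^{-1} i (mod q_n), i.e. the
   (unique, since p_n and q_n are coprime) j < q_n with p_n * j = i (mod q_n).
   When q_n = 1 this is 0. *)
Definition jidx k l n i : nat :=
  find (fun j => (p_ k l n * j) %% q_ k l n == i %% q_ k l n) (iota 0 (q_ k l n)).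

(* The concatenation structure of C_n(w_0,...,w_{k_n-1}) as a list of segments:
   SB / SE = a single boundary letter b / e, SW j = one copy of w_j. *)
Inductive seg := SB | SE | SW of nat.

Definition segs k l n : seq seg :=
  flatten [seq flatten [seq nseq (q_ k l n - jidx k l n i) SB
                          ++ nseq (l n - 1) (SW j)
                          ++ nseq (jidx k l n i) SE
                       | j <- iota 0 (k n)]
          | i <- iota 0 (q_ k l n)].

Definition seg_word (S : Type) (ws : nat -> seq (letter S)) (s : seg) : seq (letter S) :=
  match s with SB => [:: LB] | SE => [:: LE] | SW j => ws j end.

Definition Cn (S : Type) k l n (ws : nat -> seq (letter S)) : seq (letter S) :=
  flatten [seq seg_word ws s | s <- segs k l n].

Definition seg_start (S : Type) k l n (ws : nat -> seq (letter S)) (t : nat) : nat :=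
  sumn [seq size (seg_word ws s) | s <- take t (segs k l n)].
Definition seg_end (S : Type) k l n (ws : nat -> seq (letter S)) (t : nat) : nat :=
  seg_start k l n ws t + size (seg_word ws (nth SB (segs k l n) t)).

Definition is_SW (j : nat) (s : seg) : bool :=
  if s is SW j' then j' == j else false.

Definition is_occ k l n (t j : nat) : bool :=
  (t < size (segs k l n)) && is_SW j (nth SB (segs k l n) t).

(* rev(w') placed on [a, a + |w'|): the t'-th segment of w' (occupying
   [st, en) in w') occupies [a + |w'| - en, a + |w'| - st) in the placed rev(w'). *)
Definition rplaced_start (S : Type) k l n (ws' : nat -> seq (letter S)) a t' :=
  a + size (Cn k l n ws') - seg_end k l n ws' t'.
Definition rplaced_end (S : Type) k l n (ws' : nat -> seq (letter S)) a t' :=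
  a + size (Cn k l n ws') - seg_start k l n ws' t'.

Definition lined_up (S : Type) k l n (ws ws' : nat -> seq (letter S)) a t j' : bool :=
  has (fun t' => is_occ k l n t' j'
                 && (seg_start k l n ws t == rplaced_start k l n ws' a t')
                 && (seg_end k l n ws t == rplaced_end k l n ws' a t'))
      (iota 0 (size (segs k l n))).

Definition rboundary (S : Type) k l n (ws' : nat -> seq (letter S)) a x : bool :=
  (a <= x < a + size (Cn k l n ws'))
  && all (fun t' => [exists j' : 'I_(k n), is_occ k l n t' j'] ==>
                    ~~ (rplaced_start k l n ws' a t' <= x < rplaced_end k l n ws' a t'))
         (iota 0 (size (segs k l n))).

From HB Require Import structures.
From mathcomp Require Import all_boot zify.
Set Implicit Arguments. Unset Strict Implicit. Unset Printing Implicit Defensive.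

(* Cut C_n(w_0, ..., w_{k_n-1}) into its q_n k_n blocks b^{q_n - j_a} w_j^{l_n - 1} e^{j_a}
   (a < q_n, j < k_n), each made of q_n + l_n - 1 segments and l_n q_n letters. Reversing w'
   and shifting it by j_1 puts its block (q_n - 1 - a, k_n - 1 - j) opposite block (a, j) of w,
   and the copies of n-words in these two blocks are offset by j_1 + j_{q_n-1-a} + j_a letters.
   This offset is c_a q_n with c_a <= 2, since p_n times it is 1 + (q_n - 1 - a) + a = q_n
   modulo q_n.
   Hence the m-th copy of v_j in block (a, j) faces the (c_a + l_n - 3 - m)-th copy of
   rev(v'_{k_n-1-j}) when that index lies in [0, l_n - 1); in the two remaining cases
   (m = 0 and c_a = 2, or m = l_n - 2 and c_a = 0) it faces only letters b and e, possibly
   those of the next block. So the number of lined-up copies of v_i is the sum over a of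
   the number of admissible m, whatever i is. *)

Lemma pq_S k l m :
  p_ k l m.+1 = p_ k l m * q_ k l m * k m * l m + 1 /\
  q_ k l m.+1 = k m * l m * (q_ k l m * q_ k l m).
Proof. by rewrite /p_ /q_ /=; case: (pq k l m). Qed.

Lemma q_pos k l m : (forall m, 0 < k m) -> (forall m, 0 < l m) -> 0 < q_ k l m.
Proof.
move=> k_gt0 l_gt0; elim: m => [|m IHm]; first by [].
by rewrite (pq_S k l m).2 !muln_gt0 k_gt0 l_gt0 IHm.
Qed.

Lemma mulnB1Sr m n : 0 < m -> m * n = (m - 1) * n + n.
Proof. by move=> m_gt0; rewrite -mulSnr subn1 prednK. Qed.

Lemma coprime_addn1 d x : d %| x -> coprime (x + 1) d.
Proof. by case/dvdnP=> y ->; rewrite /coprime gcdnC gcdnMDl gcdn1. Qed.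

Lemma coprime_pq k l m : coprime (p_ k l m) (q_ k l m).
Proof.
case: m => [|m]; first by [].
have [-> ->] := pq_S k l m.
rewrite !coprimeMr !coprime_addn1 //.
- by apply/dvdn_mulr/dvdn_mulr/dvdn_mull.
- exact: dvdn_mull.
- by apply/dvdn_mulr/dvdn_mull.
Qed.

Section JIndex.
Variables (k l : nat -> nat) (n : nat).
Hypothesis q_gt0 : 0 < q_ k l n.
Local Notation p := (p_ k l n).
Local Notation q := (q_ k l n).
Local Notation J := (jidx k l n).

Lemma has_jidx i : has (fun j => p * j %% q == i %% q) (iota 0 q).
Proof.
have cp := coprime_pq k l n.
have /dvdnP [u hu] : p %| chinese p q 0 i by rewrite /dvdn (chinese_modl cp) mod0n.
apply/hasP; exists (u %% q); first by rewrite mem_iota ltn_pmod.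
by rewrite modnMmr mulnC -hu (chinese_modr cp).
Qed.

Lemma jidx_lt i : J i < q.
Proof. by rewrite /jidx -[X in _ < X](size_iota 0 q) -has_find has_jidx. Qed.

Lemma jidx_mod i : p * J i = i %[mod q].
Proof.
have := nth_find 0 (has_jidx i).
by rewrite nth_iota ?add0n => [/eqP|]; last exact: jidx_lt.
Qed.

Lemma jidx0 : J 0 = 0.
Proof. by rewrite /jidx; case: q q_gt0 => //= q' _; rewrite muln0 mod0n. Qed.

Lemma jidx_modD i j : p * (J i + J j) = i + j %[mod q].
Proof. by rewrite mulnDr -[LHS]modnDm !jidx_mod modnDm. Qed.

Lemma dvdn_jidx x y : p * x = y %[mod q] -> q %| y -> q %| x.
Proof.
have cp : coprime q p by rewrite coprime_sym coprime_pq.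
by rewrite -(Gauss_dvdr x cp) /dvdn => ->.
Qed.

Lemma jidx_reflect_dvd a : a < q -> q %| J 1 + J (q - 1 - a) + J a.
Proof.
move=> ha; apply: (@dvdn_jidx _ (1 + (q - 1 - a) + a)).
  by rewrite mulnDr -[LHS]modnDm jidx_modD jidx_mod modnDm.
by rewrite (_ : _ + _ + _ = q) //; lia.
Qed.

Lemma jidx_compl a : 0 < a < q -> J (q - a) + J a = q.
Proof.
move=> /andP[a_gt0 ha].
have /dvdnP [d hd] : q %| J (q - a) + J a.
  by apply: (dvdn_jidx (jidx_modD _ _)); rewrite subnK // ltnW.
have Ja_gt0 : 0 < J a.
  by case: posnP (jidx_mod a) => // ->; rewrite muln0 mod0n modn_small //; lia.
have d_lt2 : d < 2.
  by rewrite -(ltn_pmul2r q_gt0) -hd; have := jidx_lt (q - a); have := jidx_lt a; lia.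
by case: d d_lt2 hd => [|[|]] //; lia.
Qed.

End JIndex.

Section UniformFlatten.
Variables (T : Type) (L : nat) (ss : seq (seq T)).
Hypothesis size_ss : all (fun s => size s == L) ss.

Lemma size_flatten_uniform : size (flatten ss) = size ss * L.
Proof.
elim: ss size_ss => [|s ss' IHss] //= /andP[/eqP size_s /IHss].
by rewrite size_cat size_s mulSn => ->.
Qed.

Lemma nth_flatten_uniform (x0 : T) b r :
  r < L -> nth x0 (flatten ss) (b * L + r) = nth x0 (nth [::] ss b) r.
Proof.
elim: ss size_ss b => [|s ss' IHss] /=; first by move=> _ b; rewrite !nth_nil.
move=> /andP[/eqP size_s /IHss {}IHss] b hr; rewrite nth_cat size_s.
case: b => [|b]; first by rewrite add0n hr.
by rewrite mulSn -addnA ltnNge leq_addr addKn IHss.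
Qed.

Lemma take_flatten_uniform b r : r <= L -> b < size ss ->
  take (b * L + r) (flatten ss) = flatten (take b ss) ++ take r (nth [::] ss b).
Proof.
elim: ss size_ss b => [|s ss' IHss] //= /andP[/eqP size_s /IHss {}IHss] b hr.
rewrite take_cat size_s; case: b => [|b] hb.
  by rewrite add0n; case: ltngtP hr => // ->; rewrite -size_s take_size subnn take0 cats0.
by rewrite mulSn -addnA ltnNge leq_addr /= addKn IHss // catA.
Qed.

End UniformFlatten.

Lemma sumn_map_flatten_uniform T (f : T -> nat) P (ss : seq (seq T)) :
  all (fun s => sumn (map f s) == P) ss -> sumn (map f (flatten ss)) = size ss * P.
Proof.
elim: ss => [|s ss IHss] //= /andP[/eqP wt_s /IHss].
by rewrite map_cat sumn_cat wt_s mulSn => ->.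
Qed.

Lemma count_iota_blocks (h : pred nat) m c L :
  count h (iota m (c * L)) = \sum_(b < c) count h (iota (m + b * L) L).
Proof.
elim: c => [|c IHc]; first by rewrite big_ord0.
by rewrite mulSnr iotaD count_cat IHc big_ord_recr.
Qed.

Lemma count_iota_window (h : pred nat) s M L : s + M <= L ->
  count (fun r => (s <= r < s + M) && h (r - s)) (iota 0 L) = count h (iota 0 M).
Proof.
move=> hL; rewrite -(subnKC hL) !iotaD !count_cat !add0n.
rewrite (eq_in_count (a2 := pred0)) ?count_pred0; last first.
  by move=> r; rewrite mem_iota leq0n add0n /= => hr; rewrite leqNgt hr.
rewrite [X in _ + X](eq_in_count (a2 := pred0)) ?count_pred0; last first.
  by move=> r; rewrite mem_iota /= => /andP[hr _]; rewrite ltnNge hr andbF.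
rewrite -[s]addn0 iotaDl count_map addn0 add0n.
apply: eq_in_count => r; rewrite mem_iota add0n => /andP[_ hr] /=.
by rewrite !addn0 addKn leq_addr ltn_add2l hr.
Qed.

Definition seg_code (s : seg) : option (option nat) :=
  match s with SB => None | SE => Some None | SW j => Some (Some j) end.
Definition seg_decode (c : option (option nat)) : seg :=
  match c with None => SB | Some None => SE | Some (Some j) => SW j end.
Lemma seg_codeK : cancel seg_code seg_decode. Proof. by case. Qed.
HB.instance Definition _ := Equality.copy seg (can_type seg_codeK).

Lemma rboundary_notin S k l n (ws' : nat -> seq (letter S)) a x t' j' :
  rboundary k l n ws' a x -> is_occ k l n t' j' -> j' < k n ->
  ~~ (rplaced_start k l n ws' a t' <= x < rplaced_end k l n ws' a t').
Proof.
move=> /andP[_ /allP far] occ_t' hj'.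
have := far t'; rewrite mem_iota (andP occ_t').1 => /(_ isT) /implyP; apply.
by apply/existsP; exists (Ordinal hj').
Qed.

Section Layout.
Variables (k l : nat -> nat) (n : nat).
Hypotheses (q_gt0 : 0 < q_ k l n) (k_gt0 : 0 < k n) (l_gt0 : 0 < l n).
Local Notation q := (q_ k l n).
Local Notation J := (jidx k l n).
Local Notation K := (k n).
Local Notation M := (l n - 1).
Local Notation segs := (segs k l n).

Definition block a j := nseq (q - J a) SB ++ nseq M (SW j) ++ nseq (J a) SE.
Definition seg_size (s : seg) := if s is SW _ then q else 1.
Definition seg_pos t := sumn (map seg_size (take t segs)).

Local Notation L := (q + M).
Local Notation P := (l n * q).
Local Notation N := (q * K * P).
Local Notation blockb b := (block (b %/ K) (b %% K)).

Lemma segsE : segs = flatten [seq blockb b | b <- iota 0 (q * K)].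
Proof.
suff flatten_blocks m c : flatten [seq flatten [seq block a j | j <- iota 0 K] | a <- iota m c]
    = flatten [seq blockb b | b <- iota (m * K) (c * K)] by exact: flatten_blocks 0 q.
elim: c m => [|c IHc] m; first by [].
rewrite [c.+1 * K]mulSn iotaD map_cat flatten_cat addnC -mulSn -IHc /=; congr (_ ++ _).
rewrite -[m * K]addn0 iotaDl -map_comp; congr flatten; apply/eq_in_map => j.
rewrite mem_iota add0n => /andP[_ hj] /=.
by rewrite divnMDl // divn_small // addn0 modnMDl modn_small.
Qed.

Lemma size_block a j : size (block a j) = L.
Proof. by rewrite !size_cat !size_nseq; have := jidx_lt q_gt0 a; lia. Qed.

Lemma weight_block a j : sumn (map seg_size (block a j)) = P.
Proof.
rewrite !map_cat !map_nseq !sumn_cat !sumn_nseq (mulnB1Sr q l_gt0) /=.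
by have := jidx_lt q_gt0 a; lia.
Qed.

Lemma size_blocks : all (fun s => size s == L) [seq blockb b | b <- iota 0 (q * K)].
Proof. by rewrite all_map; apply/allP => b _ /=; rewrite size_block. Qed.

Lemma size_segs : size segs = q * K * L.
Proof. by rewrite segsE (size_flatten_uniform size_blocks) size_map size_iota. Qed.

Lemma nth_segs b r : b < q * K -> r < L -> nth SB segs (b * L + r) = nth SB (blockb b) r.
Proof.
move=> hb hr; rewrite segsE (nth_flatten_uniform size_blocks) //.
by rewrite (nth_map 0) ?size_iota // nth_iota.
Qed.

Lemma seg_pos_blocks b r : b < q * K -> r <= L ->
  seg_pos (b * L + r) = b * P + sumn (map seg_size (take r (blockb b))).
Proof.
move=> hb hr; rewrite /seg_pos segsE take_flatten_uniform ?size_blocks ?size_map ?size_iota //.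
rewrite map_cat sumn_cat (@sumn_map_flatten_uniform _ _ P); last first.
  by rewrite -map_take all_map; apply/allP => b' _ /=; rewrite weight_block.
by rewrite size_take size_map size_iota hb (nth_map 0) ?size_iota // nth_iota.
Qed.

Lemma mem_segs_SW j : SW j \in segs -> j < K.
Proof.
case/flatten_mapP => a _ /flatten_mapP [j']; rewrite mem_iota => /andP[_ hj'].
by rewrite !mem_cat !mem_nseq => /or3P [] /andP[_ /eqP] // [->].
Qed.

Lemma is_SW_nth_block i a j r :
  is_SW i (nth SB (block a j) r) = (j == i) && (q - J a <= r < q - J a + M).
Proof.
rewrite /block !nth_cat !size_nseq !nth_nseq.
case: ltnP => [hr|hr]; first by rewrite andbF.
case: ltnP => hr'; first by rewrite /= (_ : r < q - J a + M) ?andbT //; lia.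
by rewrite /= [r < _]ltnNge (_ : q - J a + M <= r) ?andbF; [case: ifP | lia].
Qed.

Lemma is_occ_blocks b r i : b < q * K -> r < L ->
  is_occ k l n (b * L + r) i =
  (b %% K == i) && (q - J (b %/ K) <= r < q - J (b %/ K) + M).
Proof.
move=> hb hr; rewrite /is_occ nth_segs // is_SW_nth_block size_segs.
suff -> : b * L + r < q * K * L by [].
apply: (@leq_trans (b.+1 * L)); first by rewrite mulSn; lia.
by rewrite leq_mul2r hb orbT.
Qed.

(* The m-th copy of w_j in block (a, j): its index in [segs] and the position of its first letter. *)
Definition occ_seg a j m := (a * K + j) * L + (q - J a + m).
Definition occ_pos a j m := (a * K + j) * P + (q - J a) + m * q.

Lemma block_index_lt a j : a < q -> j < K -> a * K + j < q * K.
Proof.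
move=> ha hj; apply: (@leq_trans (a.+1 * K)); first by rewrite mulSn; lia.
by rewrite leq_mul2r ha orbT.
Qed.

Lemma divn_block a j : j < K -> (a * K + j) %/ K = a.
Proof. by move=> hj; rewrite divnMDl // divn_small ?addn0. Qed.

Lemma modn_block a j : j < K -> (a * K + j) %% K = j.
Proof. by move=> hj; rewrite modnMDl modn_small. Qed.

Section Occurrence.
Variables (a j m : nat).
Hypotheses (ha : a < q) (hj : j < K) (hm : m < M).

Lemma is_occ_seg : is_occ k l n (occ_seg a j m) j.
Proof.
rewrite /occ_seg is_occ_blocks ?block_index_lt ?divn_block ?modn_block ?eqxx //=.
  by rewrite leq_addr ltn_add2l.
by have := jidx_lt q_gt0 a; lia.
Qed.

Lemma nth_occ_seg : nth SB segs (occ_seg a j m) = SW j.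
Proof.
have /andP[_] := is_occ_seg.
by case: (nth SB segs (occ_seg a j m)) => // j' /eqP ->.
Qed.

Lemma seg_pos_occ : seg_pos (occ_seg a j m) = occ_pos a j m.
Proof.
have Ja_lt := jidx_lt q_gt0 a.
rewrite /occ_seg seg_pos_blocks ?block_index_lt ?divn_block ?modn_block //; last by lia.
rewrite /occ_pos -addnA; congr (_ + _).
rewrite /block -(subnKC (ltnW hm)) nseqD -catA catA take_size_cat; last first.
  by rewrite size_cat !size_nseq.
by rewrite map_cat !map_nseq sumn_cat !sumn_nseq mul1n mulnC.
Qed.

Lemma occ_pos_bound : occ_pos a j m + q <= q * K * P.
Proof.
have Ja_lt := jidx_lt q_gt0 a.
have : m.+1 * q <= M * q by rewrite leq_mul2r hm orbT.
have : (a * K + j).+1 * P <= q * K * P by rewrite leq_mul2r block_index_lt ?orbT.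
by rewrite /occ_pos !mulSn (mulnB1Sr q l_gt0); lia.
Qed.

End Occurrence.

Lemma is_occP t i : is_occ k l n t i ->
  exists a m, [/\ a < q, i < K, m < M & t = occ_seg a i m].
Proof.
move=> occ_t; have L_gt0 : 0 < L by lia.
have t_lt : t < q * K * L by move: occ_t => /andP[]; rewrite size_segs.
have hb : t %/ L < q * K by rewrite ltn_divLR.
have ht : t = t %/ L * L + t %% L by rewrite -divn_eq.
move: occ_t; rewrite ht is_occ_blocks ?ltn_pmod // => /andP[/eqP <- /andP[h1 h2]].
exists (t %/ L %/ K), (t %% L - (q - J (t %/ L %/ K))); split.
- by rewrite ltn_divLR.
- exact: ltn_pmod.
- lia.
- by rewrite /occ_seg subnKC // -!divn_eq.
Qed.

Section Words.
Variables (S : Type) (ws : nat -> seq (letter S)).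
Hypothesis size_ws : forall j, j < K -> size (ws j) = q.

Lemma size_seg_word s : s \in segs -> size (seg_word ws s) = seg_size s.
Proof. by case: s => // j /mem_segs_SW /size_ws. Qed.

Lemma seg_startE t : seg_start k l n ws t = seg_pos t.
Proof.
rewrite /seg_start /seg_pos; congr sumn; apply/eq_in_map => s /mem_take.
exact: size_seg_word.
Qed.

Lemma seg_endE t : seg_end k l n ws t = seg_pos t + seg_size (nth SB segs t).
Proof.
rewrite /seg_end seg_startE; congr addn.
case: (ltnP t (size segs)) => ht; first by rewrite size_seg_word ?mem_nth.
by rewrite !nth_default.
Qed.

Lemma size_Cn : size (Cn k l n ws) = q * K * P.
Proof.
rewrite /Cn size_flatten /shape -map_comp.
rewrite (eq_in_map (_ \o _) seg_size _).1; last exact: size_seg_word.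
rewrite segsE (@sumn_map_flatten_uniform _ _ P) ?size_map ?size_iota //.
by rewrite all_map; apply/allP => b _ /=; rewrite weight_block.
Qed.

Lemma seg_start_occ a j m : a < q -> j < K -> m < M ->
  seg_start k l n ws (occ_seg a j m) = occ_pos a j m.
Proof. by move=> ha hj hm; rewrite seg_startE seg_pos_occ. Qed.

Lemma seg_end_occ a j m : a < q -> j < K -> m < M ->
  seg_end k l n ws (occ_seg a j m) = occ_pos a j m + q.
Proof. by move=> ha hj hm; rewrite seg_endE seg_pos_occ ?nth_occ_seg. Qed.

End Words.

Section Alignment.
Variables (S : Type) (v v' : nat -> seq (letter S)).
Hypotheses (size_v : forall j, j < K -> size (v j) = q)
           (size_v' : forall j, j < K -> size (v' j) = q).

Definition shift a := (J 1 + J (q - 1 - a) + J a) %/ q.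
Definition aligned a m := (shift a <= m.+1) && (m.+2 <= shift a + M).

Lemma shiftE a : a < q -> J 1 + J (q - 1 - a) + J a = shift a * q.
Proof. by move=> ha; rewrite divnK // jidx_reflect_dvd. Qed.

Lemma shift_le2 a : a < q -> shift a <= 2.
Proof.
move=> ha; rewrite -ltnS -(ltn_pmul2r q_gt0) -shiftE //.
by have := jidx_lt q_gt0 1; have := jidx_lt q_gt0 a; have := jidx_lt q_gt0 (q - 1 - a); lia.
Qed.

Lemma blocks_reflect a j : a < q -> j < K ->
  N = (a * K + j) * P + ((q - 1 - a) * K + (K - 1 - j)) * P + P.
Proof.
move=> ha hj; rewrite -mulnDl -mulSnr; congr (_ * _).
have : a.+1 * K + (q - 1 - a) * K = q * K by rewrite -mulnDl; congr (_ * _); lia.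
by rewrite mulSn; lia.
Qed.

Lemma lined_up_aligned a j m : a < q -> j < K -> m < M -> aligned a m ->
  lined_up k l n v v' (J 1) (occ_seg a j m) (K - j - 1).
Proof.
move=> ha hj hm /andP[shift_le shift_ge].
set a' := q - 1 - a; set j' := K - 1 - j; set m' := shift a + M - 2 - m.
have ha' : a' < q by rewrite /a'; lia.
have hj' : j' < K by rewrite /j'; lia.
have hm' : m' < M by rewrite /m'; lia.
apply/hasP; exists (occ_seg a' j' m').
  by have /andP[] := is_occ_seg ha' hj' hm'; rewrite mem_iota.
rewrite (_ : K - j - 1 = j') ?is_occ_seg //=; last by rewrite /j'; lia.
rewrite /rplaced_start /rplaced_end size_Cn // seg_end_occ // seg_start_occ //.
rewrite seg_end_occ // seg_start_occ // (blocks_reflect ha hj) /occ_pos.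
have := shiftE ha; have := jidx_lt q_gt0 1.
have : m' * q + m * q + 2 * q = shift a * q + M * q by rewrite -!mulnDl /m'; congr (_ * _); lia.
have := mulnB1Sr q l_gt0; move: (jidx_lt q_gt0 a) (jidx_lt q_gt0 a').
by rewrite -/a' -/j' => *; apply/andP; split; apply/eqP; lia.
Qed.

Definition block_gap a j y :=
  let s := (a * K + j) * P in (s <= y < s + (q - J a)) || (s + P - J a <= y < s + P).

Lemma block_gap_disjoint a0 j0 a j m y : a0 < q -> j0 < K -> a < q -> j < K -> m < M ->
  block_gap a0 j0 y -> (y < occ_pos a j m) || (occ_pos a j m + q <= y).
Proof.
move=> ha0 hj0 ha hj hm gap_y.
have := mulnB1Sr q l_gt0; have := jidx_lt q_gt0 a; have := jidx_lt q_gt0 a0.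
have : m.+1 * q <= M * q by rewrite leq_mul2r hm orbT.
rewrite /occ_pos mulSn; move: gap_y; rewrite /block_gap.
case: (ltngtP (a * K + j) (a0 * K + j0)) => hB.
- have : (a * K + j).+1 * P <= (a0 * K + j0) * P by rewrite leq_mul2r hB orbT.
  rewrite mulSn; lia.
- have : (a0 * K + j0).+1 * P <= (a * K + j) * P by rewrite leq_mul2r hB orbT.
  rewrite mulSn; lia.
- have ea : a = a0 by rewrite -(divn_block a hj) hB divn_block.
  by rewrite hB ea; lia.
Qed.

Lemma rboundary_of_gap a0 j0 x : a0 < q -> j0 < K -> J 1 <= x < J 1 + N ->
  block_gap a0 j0 (J 1 + N - 1 - x) -> rboundary k l n v' (J 1) x.
Proof.
move=> ha0 hj0 hx gap_x.
rewrite /rboundary size_Cn // hx; apply/allP => t' _; apply/implyP => /existsP [i occ_t'].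
have [a [m [ha hi hm ->]]] := is_occP occ_t'.
rewrite /rplaced_start /rplaced_end size_Cn // seg_end_occ // seg_start_occ //.
have := block_gap_disjoint ha0 hj0 ha hi hm gap_x.
by have := occ_pos_bound ha hi hm; move: hx; lia.
Qed.

Section Misaligned.
Variables (a j m x : nat).
Hypotheses (ha : a < q) (hj : j < K) (hm : m < M).
Hypothesis hx : occ_pos a j m <= x < occ_pos a j m + q.
Local Notation a' := (q - 1 - a).
Local Notation j' := (K - 1 - j).

Lemma reflect_gap_shift0 : shift a = 0 -> m.+1 = M ->
  J 1 <= x < J 1 + N /\ block_gap a' j' (J 1 + N - 1 - x).
Proof.
move=> shift0 em; have := shiftE ha; rewrite shift0 mul0n.
have := blocks_reflect ha hj; have := mulnB1Sr q l_gt0.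
have : m * q + q = M * q by rewrite -em mulSn addnC.
have := hx; rewrite /occ_pos /block_gap /=.
set BP := (a * K + j) * P; set BP' := (a' * K + j') * P.
lia.
Qed.

Lemma reflect_gap_shift2 : shift a = 2 -> m = 0 ->
  J 1 <= x < J 1 + N /\
  exists a0 j0, [/\ a0 < q, j0 < K & block_gap a0 j0 (J 1 + N - 1 - x)].
Proof.
move=> shift2 em; have := shiftE ha; rewrite shift2 => hs.
have J1_lt := jidx_lt q_gt0 1; have Ja_lt := jidx_lt q_gt0 a.
have Ja'_lt := jidx_lt q_gt0 a'.
have a_gt0 : 0 < a by case: posnP hs Ja'_lt => // ->; rewrite jidx0 //; lia.
have P_le : P <= (a * K + j) * P by rewrite leq_pmull // addn_gt0 muln_gt0 a_gt0 k_gt0.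
have := blocks_reflect ha hj; have := mulnB1Sr q l_gt0; have := hx.
rewrite /occ_pos em mul0n addn0 /block_gap /=.
set BP := (a * K + j) * P in P_le *; set BP' := (a' * K + j') * P.
move=> /andP[x_ge x_lt] eP eN; split; first lia.
case: (ltnP (J 1 + N - 1 - x) (BP' + P)) => hy; first by exists a', j'; split => //; lia.
have [j0|j_gt0] := posnP j.
  have Jnext : J (a' + 1) + J a = q by rewrite (_ : a' + 1 = q - a) ?jidx_compl ?a_gt0 //; lia.
  have next : ((a' + 1) * K + 0) * P = BP' + P.
    by rewrite addn0 -mulSnr; congr (_ * _); rewrite j0 mulnDl; lia.
  exists (a' + 1), 0; split => //; first lia.
  by rewrite next; lia.
have next : (a' * K + (j' + 1)) * P = BP' + P by rewrite addn1 addnS mulSnr.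
by exists a', (j' + 1); split; [lia | lia | rewrite next; lia].
Qed.

End Misaligned.

Lemma rboundary_misaligned a j m x : a < q -> j < K -> m < M -> ~~ aligned a m ->
  occ_pos a j m <= x < occ_pos a j m + q -> rboundary k l n v' (J 1) x.
Proof.
move=> ha hj hm misaligned hx; have := shift_le2 ha.
move: misaligned; rewrite /aligned negb_and -!ltnNge => /orP [shift_gt shift_le2|shift_lt shift_le2].
  have [||hxN [a0 [j0 [ha0 hj0]]]] := reflect_gap_shift2 ha hj hm hx; [lia | lia |].
  exact: rboundary_of_gap.
have [||hxN] := reflect_gap_shift0 ha hj hm hx; [lia | lia |].
apply: rboundary_of_gap => //; lia.
Qed.

Lemma lined_up_occ_seg a j m : a < q -> j < K -> m < M ->
  lined_up k l n v v' (J 1) (occ_seg a j m) (K - j - 1) = aligned a m.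
Proof.
move=> ha hj hm; case: (boolP (aligned a m)) => [|misaligned]; first exact: lined_up_aligned.
apply/negbTE/negP => /hasP [t' _ /andP[/andP[occ_t' /eqP start_eq] /eqP end_eq]].
have hx : occ_pos a j m <= occ_pos a j m < occ_pos a j m + q by rewrite leqnn; lia.
have hj' : K - j - 1 < K by lia.
have := rboundary_notin (rboundary_misaligned ha hj hm misaligned hx) occ_t' hj'.
by rewrite -start_eq -end_eq seg_start_occ // seg_end_occ // hx.
Qed.

Lemma count_block i a j : i < K -> a < q -> j < K ->
  count (fun t => is_occ k l n t i && lined_up k l n v v' (J 1) t (K - i - 1))
        (iota ((a * K + j) * L) L) =
  if j == i then count (aligned a) (iota 0 M) else 0.
Proof.
move=> hi ha hj; have Ja_lt := jidx_lt q_gt0 a.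
rewrite -[X in iota X]addn0 iotaDl count_map.
have -> : count (fun r => is_occ k l n ((a * K + j) * L + r) i
                          && lined_up k l n v v' (J 1) ((a * K + j) * L + r) (K - i - 1)) (iota 0 L)
  = count (fun r => (j == i) && ((q - J a <= r < q - J a + M) && aligned a (r - (q - J a)))) (iota 0 L).
  apply: eq_in_count => r; rewrite mem_iota add0n => /andP[_ hr] /=.
  rewrite is_occ_blocks ?block_index_lt ?divn_block ?modn_block //.
  case: eqP => [<-|] //; case: (boolP (_ <= r < _)) => //= /andP[h1 h2].
  have -> : (a * K + j) * L + r = occ_seg a j (r - (q - J a)) by rewrite /occ_seg subnKC.
  by rewrite lined_up_occ_seg //; lia.
case: eqP => _; last by elim: (iota 0 L).
by apply: count_iota_window; lia.
Qed.

Lemma count_lined_up i : i < K ->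
  count (fun t => is_occ k l n t i && lined_up k l n v v' (J 1) t (K - i - 1))
        (iota 0 (size segs)) = \sum_(a < q) count (aligned a) (iota 0 M).
Proof.
move=> hi; rewrite size_segs // -mulnA count_iota_blocks; apply: eq_bigr => a _.
rewrite add0n count_iota_blocks (bigD1 (Ordinal hi)) //= big1 ?addn0 => [|j /negPf ne_ji].
  by rewrite mulnA -mulnDl count_block // eqxx.
rewrite mulnA -mulnDl count_block // ifF //; exact: ne_ji.
Qed.

End Alignment.

End Layout.

Unset Implicit Arguments. Set Strict Implicit.

Theorem mainTheorem8 (S : Type) (k l : nat -> nat)
  (hk : forall m, 2 <= k m) (hl : forall m, 2 <= l m)
  (W : nat -> seq (letter S) -> Prop)
  (hW : forall m u, W m u -> size u = q_ k l m)
  (hWS : forall m u, W m.+1 u <->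
           exists ws, (forall j, j < k m -> W m (ws j)) /\ u = Cn k l m ws)
  (n : nat) (v v' : nat -> seq (letter S))
  (hv : forall j, j < k n -> W n (v j))
  (hv' : forall j, j < k n -> W n (v' j)) :
  let j1 := jidx k l n 1 in
  (forall t i, is_occ k l n t i ->
     lined_up k l n v v' j1 t (k n - i - 1)
     \/ (forall x, seg_start k l n v t <= x < seg_end k l n v t ->
                   rboundary k l n v' j1 x))
  /\ exists C, forall i, i < k n ->
       count (fun t => is_occ k l n t i && lined_up k l n v v' j1 t (k n - i - 1))
             (iota 0 (size (segs k l n))) = C.
Proof.
have k_gt0 m : 0 < k m by exact: ltnW (hk m).
have l_gt0 m : 0 < l m by exact: ltnW (hl m).
have q_gt0 := q_pos n k_gt0 l_gt0.
have size_v j (hj : j < k n) : size (v j) = q_ k l n := hW _ _ (hv j hj).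
have size_v' j (hj : j < k n) : size (v' j) = q_ k l n := hW _ _ (hv' j hj).
split=> [t i /(is_occP q_gt0 (k_gt0 n) (l_gt0 n)) [a [m [ha hi hm ->]]]|].
  case: (boolP (aligned k l n a m)) => [|misaligned]; first by left; apply: lined_up_aligned.
  right=> x; rewrite seg_start_occ // seg_end_occ //; exact: rboundary_misaligned.
by exists (\sum_(a < q_ k l n) count (aligned k l n a) (iota 0 (l n - 1))) => i; apply: count_lined_up.
Qed.
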